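(* Let $n\ge2$ and let $F$ be a field. For $\lambda\in F^\times$ let $m_{\lambda,n}$ be the diagonal $n\times n$ matrix with first diagonal entry $\lambda^{-(n-1)}$ and remaining diagonal entries $\lambda$, and let $E=\{m_{\lambda,n}:\lambda\in F^\times\}\le\mathrm{SL}_n(F)$. Let $X$ be the set of matrices $a\in\mathrm{GL}_n(F)$ such that $\dim\ker(a-\lambda1_n)\le\dim\ker(a-1_n)+2$ for all $\lambda\in F^\times$. Then $\mathrm{GL}_n(F)=EX=\{ex: e\in E,\ x\in X\}$. *)

From mathcomp Require Import all_boot all_order all_algebra.
Set Implicit Arguments. Unset Strict Implicit. Unset Printing Implicit Defensive.
Import GRing.Theory.
Local Open Scope ring_scope.

Definition m_diag (F : fieldType) (n : nat) (l : F) : 'M[F]_n :=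
  diag_mx (\row_(i < n) if (i : nat) == 0%N then l ^- (n - 1) else l).

Definition kerdim (F : fieldType) (n : nat) (A : 'M[F]_n) : nat :=
  \rank (kermx A).

Definition inX (F : fieldType) (n : nat) (a : 'M[F]_n) : Prop :=
  a \in unitmx /\
  forall l : F, l != 0 ->
    (kerdim (a - l%:M) <= kerdim (a - 1%:M) + 2)%N.

(* Choose mu != 0 for which a - mu has the largest kernel and put
   x := m_mu^-1 a, so that x - v has the rank of a - v m_mu.  Since v m_mu
   and (v mu) 1 differ in one entry only,
   rank (a - v m_mu) >= rank (a - (v mu) 1) - 1 >= rank (a - mu 1) - 1
   by the choice of mu, while rank (a - m_mu) <= rank (a - mu 1) + 1; hence
   the kernel of x - v exceeds that of x - 1 by at most 2. *)
From mathcomp Require Import all_boot all_order all_algebra.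
From mathcomp Require Import zify.
From Stdlib Require Import Classical.
Set Implicit Arguments.
Unset Strict Implicit.
Unset Printing Implicit Defensive.
Local Open Scope ring_scope.
Import GRing.Theory.

Lemma exists_minimizer (T : Type) (P : pred T) (f : T -> nat) (x0 : T) :
  P x0 -> exists2 m, P m & forall v, P v -> (f m <= f v)%N.
Proof.
move=> Px0; apply: NNPP => no_min.
suff no_value k : forall x, P x -> f x <> k by exact: no_value _ _ Px0 erefl.
elim/ltn_ind: k => k IHk x Px fx_k; apply: no_min; exists x => // v Pv.
by rewrite leqNgt; apply/negP => lt_v; apply: (IHk (f v)) Pv _; rewrite -?fx_k.
Qed.

Section RankPerturbation.

Variable F : fieldType.

Lemma mxrank_sub_triangle m n (A B C : 'M[F]_(m, n)) :
  (\rank (A - C)%R <= \rank (A - B)%R + \rank (B - C)%R)%N.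
Proof.
have -> : A - C = (A - B) + (B - C) by rewrite addrA subrK.
exact: mxrank_add.
Qed.

Lemma mxrank_unitmx_mull n p (U : 'M[F]_n) (A : 'M[F]_(n, p)) :
  U \in unitmx -> \rank (U *m A) = \rank A.
Proof.
move=> U_unit; rewrite -mxrank_tr trmx_mul mxrankMfree ?mxrank_tr //.
by rewrite row_free_unit unitmx_tr.
Qed.

Lemma mxrank_invmx_mul_sub_scalar n (M A : 'M[F]_n) (v : F) :
  M \in unitmx -> \rank (invmx M *m A - v%:M) = \rank (A - v *: M).
Proof.
move=> M_unit; rewrite -(@mxrank_unitmx_mull _ _ (invmx M) (A - v *: M)).
  by rewrite mulmxBr -scalemxAr mulVmx // scalemx1.
by rewrite unitmx_inv.
Qed.

Lemma m_diag_unit n (l : F) : l != 0 -> m_diag n l \in unitmx.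
Proof.
move=> l_nz; rewrite unitmxE det_diag unitfE prodf_seq_neq0.
by apply/allP => i _ /=; rewrite mxE; case: ifP; rewrite ?invr_eq0 ?expf_neq0.
Qed.

Lemma scalar_mx_sub_m_diag n (mu : F) :
  mu%:M - m_diag n.+1 mu = (mu - mu ^- n) *: delta_mx ord0 ord0.
Proof.
apply/matrixP => i j; rewrite !mxE subn1 /=.
have [<-|ij] := eqVneq i j; rewrite ?mulr1n ?mulr0n ?andbb.
  by case: (unliftP ord0 i) => [k|] -> /=; rewrite ?subrr ?mulr0 ?mulr1.
by case: (i =P ord0) ij => [->|_]; case: (j =P ord0) => [->|_];
  rewrite ?eqxx ?subrr ?mulr0.
Qed.

Lemma mxrank_scalar_mx_sub_m_diag n (mu v : F) :
  (\rank ((v * mu)%:M - v *: m_diag n.+1 mu)%R <= 1)%N.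
Proof.
rewrite -scalemx1 -scalerA -scalerBr scalemx1 scalar_mx_sub_m_diag scalerA.
by rewrite (leq_trans (mxrank_scale _ _)) ?mxrank_delta.
Qed.

Lemma mxrank_sub_scalar_le_m_diag n (A : 'M[F]_n.+1) (mu v : F) :
  (\rank (A - (v * mu)%:M)%R <= \rank (A - v *: m_diag n.+1 mu)%R + 1)%N.
Proof.
rewrite (leq_trans (mxrank_sub_triangle _ (v *: m_diag n.+1 mu) _)) //.
by rewrite leq_add2l -mxrank_opp opprB mxrank_scalar_mx_sub_m_diag.
Qed.

Lemma mxrank_sub_m_diag_le_scalar n (A : 'M[F]_n.+1) (mu v : F) :
  (\rank (A - v *: m_diag n.+1 mu)%R <= \rank (A - (v * mu)%:M)%R + 1)%N.
Proof.
rewrite (leq_trans (mxrank_sub_triangle _ (v * mu)%:M _)) //.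
by rewrite leq_add2l mxrank_scalar_mx_sub_m_diag.
Qed.

End RankPerturbation.

Theorem lemma3p1 (F : fieldType) (n : nat) (hn : (2 <= n)%N) (a : 'M[F]_n) :
  a \in unitmx <->
  exists l : F, exists x : 'M[F]_n, l != 0 /\ inX x /\ a = m_diag n l *m x.
Proof.
case: n hn a => // n _ a; split; last first.
  by move=> [l [x [l_nz [[x_unit _] ->]]]]; rewrite unitmx_mul m_diag_unit.
move=> a_unit.
have [mu mu_nz mu_min] := @exists_minimizer F (fun v => v != 0)
  (fun v => \rank (a - v%:M)) 1 (oner_neq0 _).
set M := m_diag n.+1 mu; have M_unit : M \in unitmx by exact: m_diag_unit.
exists mu, (invmx M *m a); split => //; split; last by rewrite mulKVmx.
split; first by rewrite unitmx_mul unitmx_inv M_unit.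
move=> v v_nz; rewrite /kerdim !mxrank_ker !mxrank_invmx_mul_sub_scalar //.
have x_min : (\rank (a - 1 *: M)%R <= \rank (a - v *: M)%R + 2)%N.
  rewrite (leq_trans (mxrank_sub_m_diag_le_scalar _ _ 1)) // mul1r.
  rewrite -[2%N]/(1 + 1)%N addnA leq_add2r.
  apply: leq_trans (mu_min _ (mulf_neq0 v_nz mu_nz)) _.
  exact: mxrank_sub_scalar_le_m_diag.
move: x_min; move: (\rank (a - 1 *: M)%R) (\rank (a - v *: M)%R) => r1 rv; lia.
Qed.
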